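(* Let $(X,\le)$ be a partially ordered set such that $\widehat D$ is directed for every directed $D\subset X$, and let $(\overline X,\iota)$ be its directed completion. Then: (1) $\iota(X)^\uparrow=\overline X$, where for $A\subset\overline X$, $A^\uparrow$ denotes the set of suprema of directed subsets of $A$; (2) a directed completion of $X$ is given by $\{A\subset X:\ A=\widehat A\text{ and }A\text{ is directed}\}$ ordered by inclusion, together with the map $x\mapsto\downarrow x$; (3) if $(Y,\le)$ is a dcpo and $j:X\to Y$ a map, then $(Y,j)$ is a directed completion of $X$ if and only if $j(X)$ is dense in $Y$ and for every directed $B\subset X$ and every $a\in X$ we have $j(a)\in\widehat{j(B)}$ (in $Y$) if and only if $a\in\widehat B$ (in $X$).
   Context: Let $(X,\le)$ be a partially ordered set. A subset $D\subset X$ is directed if every finite subset of $D$ (including the empty one) has an upper bound in $D$; in particular directed sets are nonempty. $A\subset X$ is a lower set if $x\in A$ and $y\le x$ imply $y\in A$; $\downarrow a:=\{x\in X:x\le a\}$. $(X,\le)$ is a directed complete partial order (dcpo) if every directed subset has a supremum. A subset $A\subset X$ is directed-sup-closed if the supremum of every directed $D\subset A$ which has a supremum in $X$ belongs to $A$. For $A\subset X$, $\overline A$ is the smallest directed-sup-closed subset of $X$ containing $A$, and $\widehat A$ is the smallest subset of $X$ containing $A$ which is both a lower set and directed-sup-closed. $A$ is dense if $\overline A=X$. A map $T:X_1\to X_2$ between partially ordered sets has the Monotone Convergence Property (Mcp) if for every directed $D\subset X_1$ having a supremum, $T(D)$ has a supremum and $T(\sup D)=\sup T(D)$. A directed completion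 of $(X,\le)$ is a dcpo $(\overline X,\bar\le)$ together with a map $\iota:X\to\overline X$ with the Mcp such that for every dcpo $Z$ and every map $T:X\to Z$ with the Mcp there is a unique map $\bar T:\overline X\to Z$ with the Mcp satisfying $\bar T\circ\iota=T$. *)

Section Order.
Context {X : Type} (le : X -> X -> Prop).

Definition is_poset : Prop :=
  (forall x, le x x) /\
  (forall x y, le x y -> le y x -> x = y) /\
  (forall x y z, le x y -> le y z -> le x z).

Definition subset (A B : X -> Prop) : Prop := forall x, A x -> B x.

Definition directed (D : X -> Prop) : Prop :=
  (exists x, D x) /\
  (forall x y, D x -> D y -> exists z, D z /\ le x z /\ le y z).

Definition is_sup (D : X -> Prop) (s : X) : Prop :=
  (forall x, D x -> le x s) /\
  (forall u, (forall x, D x -> le x u) -> le s u).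

Definition dcpo : Prop :=
  is_poset /\ forall D, directed D -> exists s, is_sup D s.

Definition lower_set (A : X -> Prop) : Prop :=
  forall x y, A x -> le y x -> A y.

Definition down (a : X) : X -> Prop := fun x => le x a.

Definition dsup_closed (A : X -> Prop) : Prop :=
  forall D s, directed D -> subset D A -> is_sup D s -> A s.

Definition dclosure (A : X -> Prop) : X -> Prop :=
  fun x => forall B, subset A B -> dsup_closed B -> B x.

Definition hat (A : X -> Prop) : X -> Prop :=
  fun x => forall B, subset A B -> lower_set B -> dsup_closed B -> B x.

Definition dense (A : X -> Prop) : Prop := forall x, dclosure A x.

Definition up (A : X -> Prop) : X -> Prop :=
  fun y => exists D, directed D /\ subset D A /\ is_sup D y.

End Order.

Definition image {X Y : Type} (f : X -> Y) (A : X -> Prop) : Y -> Prop :=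
  fun y => exists x, A x /\ y = f x.

Definition range {X Y : Type} (f : X -> Y) : Y -> Prop :=
  fun y => exists x, y = f x.

Definition Mcp {X1 X2 : Type} (le1 : X1 -> X1 -> Prop) (le2 : X2 -> X2 -> Prop)
  (T : X1 -> X2) : Prop :=
  forall D s, directed le1 D -> is_sup le1 D s -> is_sup le2 (image T D) (T s).

Definition directed_completion {X Xb : Type} (le : X -> X -> Prop)
  (leb : Xb -> Xb -> Prop) (iota : X -> Xb) : Prop :=
  dcpo leb /\ Mcp le leb iota /\
  forall (Z : Type) (leZ : Z -> Z -> Prop), dcpo leZ ->
  forall T : X -> Z, Mcp le leZ T ->
    exists Tb : Xb -> Z,
      (Mcp leb leZ Tb /\ forall x, Tb (iota x) = T x) /\
      (forall Tb' : Xb -> Z, Mcp leb leZ Tb' -> (forall x, Tb' (iota x) = T x) ->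
         forall y, Tb' y = Tb y).

Definition hatDirSets {X : Type} (le : X -> X -> Prop) : Type :=
  { A : X -> Prop | (forall x, A x <-> hat le A x) /\ directed le A }.

Definition hatDirSets_le {X : Type} (le : X -> X -> Prop)
  (A B : hatDirSets le) : Prop :=
  subset (proj1_sig A) (proj1_sig B).

Lemma down_hatDir {X : Type} (le : X -> X -> Prop) (HX : is_poset le) (a : X) :
  (forall x, down le a x <-> hat le (down le a) x) /\ directed le (down le a).
Proof.
  destruct HX as [Hr [_ Ht]].
  split.
  - intro x; split.
    + intros Hx B HB _ _. exact (HB x Hx).
    + intro H. apply H.
      * intros y Hy; exact Hy.
      * intros y z Hy Hz. unfold down in *. eauto.
      * intros D s _ HD [_ Hs]. apply Hs. exact HD.
  - split.
    + exists a. apply Hr.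
    + intros x y Hx Hy. exists a. unfold down. auto.
Qed.

Definition principal {X : Type} (le : X -> X -> Prop) (HX : is_poset le)
  (a : X) : hatDirSets le :=
  exist _ (down le a) (down_hatDir le HX a).

From Stdlib Require Import FunctionalExtensionality PropExtensionality ProofIrrelevance.
From Stdlib Require Import IndefiniteDescription.

(* A dcpo Y with an Mcp map j : X -> Y is a directed completion as soon as every y is the
   supremum of j over a directed set Phi y of X, monotone and continuous in y and equal to
   the principal ideal on j(X): the extension of T : X -> Z is then forced to be
   y |-> sup T(Phi y).  For the hat-closed directed sets Phi is the identity, which gives (2).
   In (3), the hat condition makes {a | j a <= y} the hat of every directed B whose image
   has supremum y; by the hypothesis on X this set is directed, and density propagates
   "Phi y is directed with supremum y" from j(X) to all of Y.  Conversely any two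
   completions are isomorphic, which transfers (1) and the hat condition from the
   completion of (2) to an arbitrary one. *)

Definition bigcup {I X : Type} (D : I -> Prop) (F : I -> X -> Prop) : X -> Prop :=
  fun a => exists d, D d /\ F d a.

Section Suprema.
Context {X : Type} (le : X -> X -> Prop).

Lemma is_sup_ext (D D' : X -> Prop) (s : X) :
  (forall x, D x <-> D' x) -> is_sup le D s -> is_sup le D' s.
Proof.
  intros E [Hub Hleast]. split.
  - intros x Hx. apply Hub, E, Hx.
  - intros u Hu. apply Hleast. intros x Hx. apply Hu, E, Hx.
Qed.

Lemma is_sup_sandwich (A A' : X -> Prop) (s : X) :
  is_sup le A s -> subset A A' -> (forall x, A' x -> le x s) -> is_sup le A' s.
Proof.
  intros [_ Hleast] HAA' Hub. split; [exact Hub|].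
  intros u Hu. apply Hleast. intros x Hx. apply Hu, HAA', Hx.
Qed.

Lemma is_sup_unique (Hanti : forall x y, le x y -> le y x -> x = y) (D : X -> Prop) (s t : X) :
  is_sup le D s -> is_sup le D t -> s = t.
Proof. intros [Hs1 Hs2] [Ht1 Ht2]. apply Hanti; [apply Hs2 | apply Ht2]; assumption. Qed.

Lemma directed_ext (D D' : X -> Prop) :
  (forall x, D x <-> D' x) -> directed le D -> directed le D'.
Proof.
  intros E [[x Hx] Hub]. split.
  - exists x. apply E, Hx.
  - intros a b Ha Hb. destruct (Hub a b) as [z [Hz [Haz Hbz]]]; try apply E; auto.
    exists z. split; [apply E|]; auto.
Qed.

Lemma singleton_directed (Hr : forall x, le x x) (b : X) : directed le (fun z => z = b).
Proof. split; [exists b; reflexivity|]. intros x y -> ->. exists b. auto. Qed.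

Lemma hat_incl (A : X -> Prop) : subset A (hat le A).
Proof. intros x Hx B HAB _ _. apply HAB, Hx. Qed.

Lemma hat_lower (A : X -> Prop) : lower_set le (hat le A).
Proof. intros x y Hx Hyx B HAB HB HBc. apply (HB x y); [apply Hx|]; auto. Qed.

Lemma hat_dsup_closed (A : X -> Prop) : dsup_closed le (hat le A).
Proof.
  intros D s HD HDA Hs B HAB HB HBc. apply (HBc D s HD); auto.
  intros x Hx. apply HDA; auto.
Qed.

Lemma hat_min (A B : X -> Prop) :
  subset A B -> lower_set le B -> dsup_closed le B -> subset (hat le A) B.
Proof. intros HAB HB HBc x Hx. apply Hx; auto. Qed.

Lemma hat_idem (A : X -> Prop) (x : X) : hat le A x <-> hat le (hat le A) x.
Proof.
  split; [apply hat_incl|].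
  apply hat_min; [intros y Hy; exact Hy | apply hat_lower | apply hat_dsup_closed].
Qed.

Lemma hat_below (Ht : forall x y z, le x y -> le y z -> le x z) (B : X -> Prop) (t : X) :
  (forall x, B x -> le x t) -> forall y, hat le B y -> le y t.
Proof.
  intros Hub. apply hat_min; [exact Hub | |].
  - intros x y Hx Hyx. eauto.
  - intros D s _ HD [_ Hs]. apply Hs, HD.
Qed.

Lemma hat_greatest (HX : is_poset le) (A : X -> Prop) (g : X) :
  A g -> (forall x, A x -> le x g) -> forall y, hat le A y <-> le y g.
Proof.
  destruct HX as [_ [_ Ht]]. intros Hg Hub y. split.
  - apply hat_below; assumption.
  - intros Hy. apply (hat_lower A g y); [apply hat_incl, Hg | exact Hy].
Qed.

End Suprema.

Lemma image_comp {X Y Z : Type} (g : X -> Y) (f : Y -> Z) (h : X -> Z) (A : X -> Prop) :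
  (forall x, f (g x) = h x) -> forall z, image f (image g A) z <-> image h A z.
Proof.
  intros Hfg z. split.
  - intros [y [[x [Hx ->]] ->]]. exists x. auto.
  - intros [x [Hx ->]]. exists (g x). split; [exists x; auto | symmetry; apply Hfg].
Qed.

Section MonotoneConvergence.
Context {X Y : Type} (le : X -> X -> Prop) (leY : Y -> Y -> Prop).

Lemma image_directed (T : X -> Y) (D : X -> Prop) :
  (forall x y, le x y -> leY (T x) (T y)) -> directed le D -> directed leY (image T D).
Proof.
  intros HT [[x Hx] Hub]. split; [exists (T x), x; auto|].
  intros a b [x1 [H1 ->]] [x2 [H2 ->]]. destruct (Hub x1 x2 H1 H2) as [z [Hz [Hz1 Hz2]]].
  exists (T z). split; [exists z|]; auto.
Qed.

Lemma mcp_monotone (Hr : forall x, le x x) (T : X -> Y) :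
  Mcp le leY T -> forall x y, le x y -> leY (T x) (T y).
Proof.
  intros HT x y Hxy.
  assert (Hdir : directed le (fun z => z = x \/ z = y)).
  { split; [exists x; auto|]. intros a b Ha Hb. exists y.
    destruct Ha as [-> | ->], Hb as [-> | ->]; auto. }
  assert (Hsup : is_sup le (fun z => z = x \/ z = y) y).
  { split; [intros z [-> | ->]; auto|]. intros u Hu. apply Hu. auto. }
  apply (proj1 (HT _ y Hdir Hsup)). exists x. auto.
Qed.

Lemma hat_image (Hr : forall x, le x x) (T : X -> Y) (HT : Mcp le leY T) (B : X -> Prop) (a : X) :
  hat le B a -> hat leY (image T B) (T a).
Proof.
  revert a. apply hat_min.
  - intros b Hb. apply hat_incl. exists b. auto.
  - intros x y Hx Hyx. apply (hat_lower leY _ (T x)); [exact Hx|].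
    apply (mcp_monotone Hr T HT), Hyx.
  - intros D s HD HDB Hs. apply (hat_dsup_closed leY _ (image T D) (T s)).
    + apply image_directed; [apply (mcp_monotone Hr T HT) | exact HD].
    + intros z [d [Hd ->]]. apply HDB, Hd.
    + apply HT; assumption.
Qed.

Lemma mcp_id (Hr : forall x, le x x) : Mcp le le (fun x => x).
Proof.
  intros D s _ Hs. apply (is_sup_ext le D); [|exact Hs].
  intros z. split; [intros Hz; exists z; auto | intros [x [Hx ->]]; exact Hx].
Qed.

End MonotoneConvergence.

Lemma mcp_comp {X Y Z : Type} (le : X -> X -> Prop) (leY : Y -> Y -> Prop) (leZ : Z -> Z -> Prop)
  (Hr : forall x, le x x) (g : X -> Y) (f : Y -> Z) :
  Mcp le leY g -> Mcp leY leZ f -> Mcp le leZ (fun x => f (g x)).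
Proof.
  intros Hg Hf D s HD Hs.
  apply (is_sup_ext leZ (image f (image g D))); [apply image_comp; reflexivity|].
  apply Hf; [|apply Hg; assumption].
  apply (image_directed le); [apply (mcp_monotone le leY Hr g Hg) | exact HD].
Qed.

Lemma bigcup_directed {I X : Type} (leI : I -> I -> Prop) (le : X -> X -> Prop)
  (D : I -> Prop) (F : I -> X -> Prop) :
  (forall d d', leI d d' -> subset (F d) (F d')) -> directed leI D ->
  (forall d, D d -> directed le (F d)) -> directed le (bigcup D F).
Proof.
  intros Hmono [[d0 Hd0] HD] HF. split.
  - destruct (proj1 (HF d0 Hd0)) as [a Ha]. exists a, d0. auto.
  - intros x y [d1 [Hd1 Hx]] [d2 [Hd2 Hy]].
    destruct (HD d1 d2 Hd1 Hd2) as [d3 [Hd3 [H13 H23]]].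
    destruct (proj2 (HF d3 Hd3) x y) as [z [Hz [Hxz Hyz]]];
      [apply (Hmono d1); auto | apply (Hmono d2); auto |].
    exists z. split; [exists d3|]; auto.
Qed.

Lemma dense_of_up {Y : Type} (leY : Y -> Y -> Prop) (A : Y -> Prop) :
  (forall y, up leY A y) -> dense leY A.
Proof.
  intros Hup y B HAB HB. destruct (Hup y) as [D [HD [HDA Hs]]].
  apply (HB D y HD); [|exact Hs]. intros z Hz. apply HAB, HDA, Hz.
Qed.

Section CompletionCriterion.
Context {X Y : Type} (le : X -> X -> Prop) (leY : Y -> Y -> Prop) (j : X -> Y)
  (Phi : Y -> X -> Prop).
Hypotheses (HX : is_poset le) (HY : dcpo leY) (Hj : Mcp le leY j)
  (Phi_directed : forall y, directed le (Phi y))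
  (Phi_sup : forall y, is_sup leY (image j (Phi y)) y)
  (Phi_monotone : forall d y, leY d y -> subset (Phi d) (Phi y))
  (Phi_continuous : forall D y, directed leY D -> is_sup leY D y ->
     subset (Phi y) (hat le (bigcup D Phi)))
  (Phi_j : forall x a, Phi (j x) a <-> le a x).

Section Extension.
Context {Z : Type} (leZ : Z -> Z -> Prop) (HZ : dcpo leZ) (T : X -> Z) (HT : Mcp le leZ T).

Lemma extend_exists (y : Y) : exists z, is_sup leZ (image T (Phi y)) z.
Proof.
  apply (proj2 HZ). apply (image_directed le); [|apply Phi_directed].
  apply (mcp_monotone le leZ (proj1 HX) T HT).
Qed.

Definition extend (y : Y) : Z :=
  proj1_sig (constructive_indefinite_description _ (extend_exists y)).

Lemma extend_is_sup (y : Y) : is_sup leZ (image T (Phi y)) (extend y).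
Proof. exact (proj2_sig (constructive_indefinite_description _ (extend_exists y))). Qed.

Lemma extend_mcp : Mcp leY leZ extend.
Proof.
  destruct HZ as [[_ [_ HtZ]] _].
  intros D y HD Hy. split.
  - intros z [d [Hd ->]]. apply (proj2 (extend_is_sup d)).
    intros w [a [Ha ->]]. apply (proj1 (extend_is_sup y)).
    exists a. split; [apply (Phi_monotone d y); [apply (proj1 Hy) |]|]; auto.
  - intros u Hu. apply (proj2 (extend_is_sup y)). intros w [a [Ha ->]].
    apply (hat_below leZ HtZ (image T (bigcup D Phi)) u).
    + intros w [b [[d [Hd Hb]] ->]]. apply HtZ with (extend d).
      * apply (proj1 (extend_is_sup d)). exists b. auto.
      * apply Hu. exists d. auto.
    + apply (hat_image le leZ (proj1 HX) T HT). apply (Phi_continuous D y HD Hy), Ha.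
Qed.

Lemma extend_j (x : X) : extend (j x) = T x.
Proof.
  apply (is_sup_unique leZ (proj1 (proj2 (proj1 HZ))) (image T (Phi (j x)))).
  - apply extend_is_sup.
  - split.
    + intros w [a [Ha ->]]. apply (mcp_monotone le leZ (proj1 HX) T HT), Phi_j, Ha.
    + intros u Hu. apply Hu. exists x. split; [apply Phi_j, (proj1 HX) | reflexivity].
Qed.

Lemma extend_unique (T' : Y -> Z) :
  Mcp leY leZ T' -> (forall x, T' (j x) = T x) -> forall y, T' y = extend y.
Proof.
  intros HT' HT'j y.
  apply (is_sup_unique leZ (proj1 (proj2 (proj1 HZ))) (image T (Phi y))); [|apply extend_is_sup].
  apply (is_sup_ext leZ (image T' (image j (Phi y)))); [apply image_comp, HT'j|].
  apply HT'; [|apply Phi_sup].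
  apply (image_directed le); [apply (mcp_monotone le leY (proj1 HX) j Hj) | apply Phi_directed].
Qed.

End Extension.

Lemma completion_criterion : directed_completion le leY j.
Proof.
  split; [exact HY|]. split; [exact Hj|].
  intros Z leZ HZ T HT. exists (extend leZ HZ T HT). split.
  - split; [apply extend_mcp | apply extend_j].
  - apply extend_unique.
Qed.

End CompletionCriterion.

Section CompletionUniqueness.
Context {X Y1 Y2 : Type} (le : X -> X -> Prop) (le1 : Y1 -> Y1 -> Prop) (le2 : Y2 -> Y2 -> Prop)
  (j1 : X -> Y1) (j2 : X -> Y2).
Hypotheses (H1 : directed_completion le le1 j1) (H2 : directed_completion le le2 j2).

Lemma completion_retract :
  exists (f : Y1 -> Y2) (g : Y2 -> Y1),
    Mcp le2 le1 g /\ (forall x, g (j2 x) = j1 x) /\ forall y, g (f y) = y.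
Proof.
  destruct H1 as [HY1 [Hj1 U1]], H2 as [HY2 [Hj2 U2]].
  destruct (U1 _ _ HY2 j2 Hj2) as [f [[Hf Hfj] _]].
  destruct (U2 _ _ HY1 j1 Hj1) as [g [[Hg Hgj] _]].
  destruct (U1 _ _ HY1 j1 Hj1) as [e [_ Huniq]].
  exists f, g. split; [exact Hg|]. split; [exact Hgj|].
  intros y. transitivity (e y).
  - apply (Huniq (fun y => g (f y))).
    + apply (mcp_comp le1 le2 le1 (proj1 (proj1 HY1))); assumption.
    + intros x. rewrite Hfj. apply Hgj.
  - symmetry. apply (Huniq (fun y => y)); [apply (mcp_id le1), (proj1 (proj1 HY1)) | reflexivity].
Qed.

Lemma up_range_transfer :
  (forall y2, up le2 (range j2) y2) -> forall y1, up le1 (range j1) y1.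
Proof.
  destruct completion_retract as [f [g [Hg [Hgj Hgf]]]].
  intros Hup y. destruct (Hup (f y)) as [D [HD [HDr Hs]]].
  exists (image g D). split; [|split].
  - apply (image_directed le2); [|exact HD].
    apply (mcp_monotone le2 le1 (proj1 (proj1 (proj1 H2))) g Hg).
  - intros z [w [Hw ->]]. destruct (HDr w Hw) as [x ->]. exists x. apply Hgj.
  - rewrite <- (Hgf y). exact (Hg D (f y) HD Hs).
Qed.

End CompletionUniqueness.

Section HatDirectedSets.
Context {X : Type} (le : X -> X -> Prop) (HX : is_poset le)
  (Hhat : forall D : X -> Prop, directed le D -> directed le (hat le D)).

Notation H := (hatDirSets le).
Notation leH := (hatDirSets_le le).

Lemma hatDirSets_lower (A : H) : lower_set le (proj1_sig A).
Proof.
  pose proof (proj1 (proj2_sig A)) as HA. intros x y Hx Hyx. apply HA.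
  apply (hat_lower le _ x y); [apply HA|]; assumption.
Qed.

Lemma hatDirSets_dsup_closed (A : H) : dsup_closed le (proj1_sig A).
Proof.
  pose proof (proj1 (proj2_sig A)) as HA. intros D s HD HDA Hs. apply HA.
  apply (hat_dsup_closed le _ D s HD); [|exact Hs]. intros x Hx. apply HA, HDA, Hx.
Qed.

Lemma hatDirSets_poset : is_poset leH.
Proof.
  split; [|split].
  - intros A x Hx. exact Hx.
  - intros [A HA] [B HB] HAB HBA. unfold hatDirSets_le in *; simpl in *.
    assert (A = B) as <-.
    { apply functional_extensionality. intros x.
      apply propositional_extensionality. split; [apply HAB | apply HBA]. }
    f_equal. apply proof_irrelevance.
  - intros A B C HAB HBC x Hx. apply HBC, HAB, Hx.
Qed.

Definition hatDirSets_hat (B : X -> Prop) (HB : directed le B) : H :=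
  exist _ (hat le B) (conj (hat_idem le B) (Hhat B HB)).

Definition hatDirSets_sup (F : H -> Prop) (HF : directed leH F) : H :=
  hatDirSets_hat (bigcup F (@proj1_sig _ _))
    (bigcup_directed leH le F _ (fun _ _ h => h) HF (fun A _ => proj2 (proj2_sig A))).

Lemma hatDirSets_sup_is_sup (F : H -> Prop) (HF : directed leH F) :
  is_sup leH F (hatDirSets_sup F HF).
Proof.
  split.
  - intros A HA x Hx. apply hat_incl. exists A. auto.
  - intros U HU. apply hat_min.
    + intros a [A [HA Ha]]. apply (HU A HA), Ha.
    + apply hatDirSets_lower.
    + apply hatDirSets_dsup_closed.
Qed.

Lemma hatDirSets_dcpo : dcpo leH.
Proof.
  split; [exact hatDirSets_poset|].
  intros F HF. exists (hatDirSets_sup F HF). apply hatDirSets_sup_is_sup.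
Qed.

Lemma principal_mcp : Mcp le leH (principal le HX).
Proof.
  pose proof (proj2 (proj2 HX)) as Ht.
  intros D s HD Hs. split.
  - intros z [d [Hd ->]] x Hx. apply Ht with d; [exact Hx | apply (proj1 Hs), Hd].
  - intros U HU x Hx. apply (hatDirSets_lower U s x); [|exact Hx].
    apply (hatDirSets_dsup_closed U D s HD); [|exact Hs].
    intros d Hd. apply (HU (principal le HX d)); [exists d; auto | apply (proj1 HX)].
Qed.

Lemma principal_is_sup (A : H) : is_sup leH (image (principal le HX) (proj1_sig A)) A.
Proof.
  split.
  - intros z [a [Ha ->]] x Hx. apply (hatDirSets_lower A a x Ha Hx).
  - intros U HU x Hx. apply (HU (principal le HX x)); [exists x; auto | apply (proj1 HX)].
Qed.

Lemma hatDirSets_completion : directed_completion le leH (principal le HX).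
Proof.
  apply (completion_criterion le leH (principal le HX) (fun A => proj1_sig A) HX
           hatDirSets_dcpo principal_mcp).
  - intros A. apply (proj2 (proj2_sig A)).
  - apply principal_is_sup.
  - intros A B HAB. exact HAB.
  - intros D y HD Hy. apply (proj2 Hy (hatDirSets_sup D HD)), hatDirSets_sup_is_sup.
  - intros x a. reflexivity.
Qed.

Lemma completion_up_range {Xb : Type} (leb : Xb -> Xb -> Prop) (iota : X -> Xb) :
  directed_completion le leb iota -> forall y, up leb (range iota) y.
Proof.
  intros Hc. apply (up_range_transfer le leb leH iota (principal le HX) Hc hatDirSets_completion).
  intros A. exists (image (principal le HX) (proj1_sig A)). split; [|split].
  - apply (image_directed le); [|apply (proj2 (proj2_sig A))].
    apply (mcp_monotone le leH (proj1 HX) _ principal_mcp).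
  - intros z [a [_ ->]]. exists a. reflexivity.
  - apply principal_is_sup.
Qed.

Lemma completion_reflects_hat {Y : Type} (leY : Y -> Y -> Prop) (j : X -> Y) :
  directed_completion le leY j ->
  forall B a, directed le B -> hat leY (image j B) (j a) -> hat le B a.
Proof.
  intros [HY [Hj U]] B a HB Ha.
  destruct (U _ _ hatDirSets_dcpo (principal le HX) principal_mcp) as [Phi [[HPhi HPhij] _]].
  assert (Hle : leH (Phi (j a)) (hatDirSets_hat B HB)).
  { apply (hat_below leH (proj2 (proj2 hatDirSets_poset)) (image Phi (image j B))).
    - intros V [y [[b [Hb ->]] ->]]. rewrite HPhij. intros x Hx.
      apply (hat_lower le B b x); [apply hat_incl, Hb | exact Hx].
    - apply (hat_image leY leH (proj1 (proj1 HY)) Phi HPhi), Ha. }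
  rewrite HPhij in Hle. apply Hle, (proj1 HX).
Qed.

End HatDirectedSets.

Section HatReflectingMaps.
Context {X Y : Type} (le : X -> X -> Prop) (leY : Y -> Y -> Prop) (j : X -> Y).
Hypotheses (HX : is_poset le) (HY : dcpo leY)
  (Hhat : forall D : X -> Prop, directed le D -> directed le (hat le D))
  (Hdense : dense leY (range j))
  (Hj_hat : forall B a, directed le B -> (hat leY (image j B) (j a) <-> hat le B a)).

Let HtY : forall x y z, leY x y -> leY y z -> leY x z := proj2 (proj2 (proj1 HY)).

Lemma j_le_iff (a b : X) : leY (j a) (j b) <-> le a b.
Proof.
  destruct HX as [Hr _].
  assert (Hb : forall x, x = b -> le x b) by (intros x ->; apply Hr).
  rewrite <- (hat_greatest le HX (fun z => z = b) b eq_refl Hb).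
  rewrite <- (hat_greatest leY (proj1 HY) (image j (fun z => z = b)) (j b)).
  - apply Hj_hat, singleton_directed, Hr.
  - exists b. auto.
  - intros y [x [-> ->]]. apply (proj1 (proj1 HY)).
Qed.

Lemma j_mcp : Mcp le leY j.
Proof.
  intros D s HD Hs.
  assert (Hdir : directed leY (image j D))
    by (apply (image_directed le); [apply j_le_iff | exact HD]).
  destruct (proj2 HY _ Hdir) as [t Ht].
  assert (Hst : leY (j s) t).
  { apply (hat_below leY HtY (image j D) t (proj1 Ht)). apply Hj_hat; [exact HD|].
    apply (hat_dsup_closed le D D s HD (hat_incl le D) Hs). }
  split.
  - intros z [d [Hd ->]]. apply j_le_iff, (proj1 Hs), Hd.
  - intros u Hu. apply HtY with t; [exact Hst | apply (proj2 Ht), Hu].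
Qed.

Definition jdown (y : Y) : X -> Prop := fun a => leY (j a) y.

Lemma jdown_hat (B : X -> Prop) (y : Y) :
  directed le B -> is_sup leY (image j B) y -> forall a, jdown y a <-> hat le B a.
Proof.
  intros HB Hy a. split.
  - intros Ha. apply Hj_hat; [exact HB|].
    apply (hat_lower leY _ y (j a)); [|exact Ha].
    apply (hat_dsup_closed leY _ (image j B) y); [| apply hat_incl | exact Hy].
    apply (image_directed le); [apply j_le_iff | exact HB].
  - intros Ha. apply (hat_below leY HtY (image j B) y (proj1 Hy)). apply Hj_hat; assumption.
Qed.

Definition jdown_good (y : Y) : Prop :=
  directed le (jdown y) /\ is_sup leY (image j (jdown y)) y.

Lemma jdown_good_j (b : X) : jdown_good (j b).
Proof.
  split.
  - split; [exists b; apply (proj1 (proj1 HY))|].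
    intros x y Hx Hy. exists b.
    split; [apply (proj1 (proj1 HY))|]. split; apply j_le_iff; assumption.
  - split.
    + intros w [a [Ha ->]]. exact Ha.
    + intros u Hu. apply Hu. exists b. split; [apply (proj1 (proj1 HY)) | reflexivity].
Qed.

Lemma bigcup_jdown_directed (D : Y -> Prop) :
  directed leY D -> (forall d, D d -> jdown_good d) -> directed le (bigcup D jdown).
Proof.
  intros HD Hgood. apply (bigcup_directed leY le); [| exact HD |].
  - intros d d' Hdd' a Ha. apply HtY with d; assumption.
  - intros d Hd. apply (proj1 (Hgood d Hd)).
Qed.

Lemma bigcup_jdown_sup (D : Y -> Prop) (s : Y) :
  is_sup leY D s -> (forall d, D d -> jdown_good d) -> is_sup leY (image j (bigcup D jdown)) s.
Proof.
  intros Hs Hgood. split.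
  - intros z [a [[d [Hd Ha]] ->]]. apply HtY with d; [exact Ha | apply (proj1 Hs), Hd].
  - intros u Hu. apply (proj2 Hs). intros d Hd. apply (proj2 (proj2 (Hgood d Hd))).
    intros w [a [Ha ->]]. apply Hu. exists a. split; [exists d|]; auto.
Qed.

Lemma jdown_good_dsup_closed : dsup_closed leY jdown_good.
Proof.
  intros D s HD Hgood Hs.
  pose proof (bigcup_jdown_sup D s Hs Hgood) as Hsup.
  pose proof (jdown_hat _ s (bigcup_jdown_directed D HD Hgood) Hsup) as E.
  split.
  - apply (directed_ext le (hat le (bigcup D jdown))); [intros a; symmetry; apply E|].
    apply Hhat, bigcup_jdown_directed; assumption.
  - apply (is_sup_sandwich leY _ _ s Hsup).
    + intros z [a [Ha ->]]. exists a. split; [apply E, hat_incl, Ha | reflexivity].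
    + intros z [a [Ha ->]]. exact Ha.
Qed.

Lemma jdown_good_all (y : Y) : jdown_good y.
Proof.
  apply (Hdense y jdown_good); [|apply jdown_good_dsup_closed].
  intros z [b ->]. apply jdown_good_j.
Qed.

Lemma hat_reflecting_completion : directed_completion le leY j.
Proof.
  apply (completion_criterion le leY j jdown HX HY j_mcp).
  - intros y. apply jdown_good_all.
  - intros y. apply jdown_good_all.
  - intros d y Hdy a Ha. apply HtY with d; assumption.
  - intros D y HD Hy a.
    apply (jdown_hat (bigcup D jdown) y);
      [apply bigcup_jdown_directed | apply bigcup_jdown_sup]; auto using jdown_good_all.
  - intros x a. apply j_le_iff.
Qed.

End HatReflectingMaps.

Theorem mainTheorem4 (X : Type) (le : X -> X -> Prop) (HX : is_poset le)
  (Hhat : forall D : X -> Prop, directed le D -> directed le (hat le D)) :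
  (* (1) *)
  (forall (Xb : Type) (leb : Xb -> Xb -> Prop) (iota : X -> Xb),
     directed_completion le leb iota ->
     forall y : Xb, up leb (range iota) y)
  /\
  (* (2) *)
  directed_completion le (hatDirSets_le le) (principal le HX)
  /\
  (* (3) *)
  (forall (Y : Type) (leY : Y -> Y -> Prop) (j : X -> Y),
     dcpo leY ->
     (directed_completion le leY j <->
      (dense leY (range j) /\
       forall (B : X -> Prop) (a : X), directed le B ->
         (hat leY (image j B) (j a) <-> hat le B a)))).
Proof.
  split; [|split].
  - intros Xb leb iota. apply (completion_up_range le HX Hhat).
  - apply (hatDirSets_completion le HX Hhat).
  - intros Y leY j HY. split.
    + intros Hc. split.
      * apply dense_of_up, (completion_up_range le HX Hhat leY j Hc).
      * intros B a HB. split.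
        -- apply (completion_reflects_hat le HX Hhat leY j Hc B a HB).
        -- apply (hat_image le leY (proj1 HX) j (proj1 (proj2 Hc))).
    + intros [Hdense Hj_hat]. apply (hat_reflecting_completion le leY j HX HY Hhat Hdense Hj_hat).
Qed.
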